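(* Let $n\ge1$ and let $\mathcal W$ be a nonprincipal ultrafilter on a countably infinite set which is not a P-point. If $\mathcal W$ is $(n+1,T(n+1))$-weakly Ramsey, then it is also $(n,T(n))$-weakly Ramsey.
   Context: An ultrafilter $\mathcal W$ on a countably infinite set $S$ is a P-point if for every function $f$ on $S$ there is $A\in\mathcal W$ with $f\restriction A$ finite-to-one or constant. $\mathcal W$ is $(n,t)$-weakly Ramsey if whenever $[S]^n$ is partitioned into finitely many pieces there is $H\in\mathcal W$ with $[H]^n$ meeting at most $t$ pieces. An $n$-type is a linear pre-order of the formal symbols $x_1,\dots,x_n,y_1,\dots,y_n$ such that $y_1<\dots<y_n$ strictly, each $x_i<y_i$ strictly, and any two distinct equivalent symbols are both $x$'s; $T(n)$ denotes the (finite) number of $n$-types (e.g. $T(2)=4$). *)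

From mathcomp Require Import all_boot.
From Stdlib Require List.
Set Implicit Arguments. Unset Strict Implicit. Unset Printing Implicit Defensive.

Definition subset_of {S : Type} (A B : S -> Prop) : Prop := forall x, A x -> B x.

Definition finite_set {S : Type} (A : S -> Prop) : Prop :=
  exists l : list S, forall x, A x -> List.In x l.

Definition nsubset {S : Type} (n : nat) (A : S -> Prop) : Prop :=
  exists l : list S, List.NoDup l /\ List.length l = n /\
    forall x, A x <-> List.In x l.

Definition countably_infinite (S : Type) : Prop :=
  exists f : S -> nat, bijective f.

Definition ultrafilter {S : Type} (U : (S -> Prop) -> Prop) : Prop :=
  [/\ U (fun _ => True),
      ~ U (fun _ => False),
      (forall A B, U A -> subset_of A B -> U B),
      (forall A B, U A -> U B -> U (fun x => A x /\ B x)) &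
      (forall A, U A \/ U (fun x => ~ A x))].

Definition nonprincipal {S : Type} (U : (S -> Prop) -> Prop) : Prop :=
  forall a : S, ~ U (fun x => x = a).

Definition Ppoint {S : Type} (U : (S -> Prop) -> Prop) : Prop :=
  forall (Y : Type) (f : S -> Y), exists A, U A /\
    ((forall y : Y, finite_set (fun x => A x /\ f x = y)) \/
     (exists y : Y, forall x, A x -> f x = y)).

(* (n,t)-weakly Ramsey: for every partition of [S]^n into finitely many
   (k) pieces, given by a colouring c, some H in U has [H]^n meeting at most
   t pieces. *)
Definition weakly_ramsey {S : Type} (U : (S -> Prop) -> Prop) (n t : nat) : Prop :=
  forall (k : nat) (c : (S -> Prop) -> nat),
    (forall A, nsubset n A -> c A < k) ->
    exists H, U H /\
      exists L : list nat, List.length L <= t /\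
        forall A, nsubset n A -> subset_of A H -> List.In (c A) L.

(* symbols: inl i = x_(i+1), inr i = y_(i+1) *)
Definition sym (n : nat) : finType := ('I_n + 'I_n)%type.

Definition is_x {n : nat} (a : sym n) : bool := if a is inl _ then true else false.

(* R a b  means  a <= b in the pre-order *)
Definition ntype (n : nat) (R : {ffun sym n * sym n -> bool}) : bool :=
  let le a b := R (a, b) in
  let lt a b := le a b && ~~ le b a in
  [&& [forall a, forall b, le a b || le b a],
      [forall a, forall b, forall c, le a b ==> le b c ==> le a c],
      [forall a, le a a],
      [forall i : 'I_n, forall j : 'I_n, (i < j) ==> lt (inr i) (inr j)],
      [forall i : 'I_n, lt (inl i) (inr i)] &
      [forall a, forall b, ((a != b) && le a b && le b a) ==>
                           (is_x a && is_x b)]].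

Definition T (n : nat) : nat := #|[pred R : {ffun sym n * sym n -> bool} | ntype R]|.

From mathcomp Require Import all_boot zify.
From Stdlib Require Import Classical ClassicalEpsilon FunctionalExtensionality PropExtensionality.
Set Implicit Arguments. Unset Strict Implicit. Unset Printing Implicit Defensive.

(* Transport everything to ℕ along the bijection.  If f witnesses that W is not
   a P-point, send j to the least element [mm j] of its f-fibre, and read an
   increasing tuple s as the pre-order of the numbers 2·mm(s_i) (for x_i) and
   2·s_i + 1 (for y_i): this is its type.  Since f is neither constant nor
   finite-to-one on any set of W, every H in W contains elements j with mm j
   arbitrarily large and with fibre meeting H infinitely often; building a tuple
   rank level by rank level, H then realizes every type.
   Given a k-colouring c of [S]^n, colour an (n+1)-set by the pair (colour under
   c of its first n elements, type).  A set H in W seeing at most T(n+1) of these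
   colours already realizes the T(n+1) types with distinct colours, so on H the
   c-colour of the first n elements is a function of the (n+1)-type.  Appending
   to an n-tuple of H an element of H whose fibre minimum is above the tuple
   makes its (n+1)-type a function of its n-type, so c takes at most T(n) values
   on [H]^n. *)

Lemma ntypeP m (R : {ffun sym m * sym m -> bool}) : ntype R ->
  [/\ forall a b, R (a, b) || R (b, a),
      forall a b c, R (a, b) -> R (b, c) -> R (a, c),
      forall i j : 'I_m, i < j -> R (inr i, inr j) && ~~ R (inr j, inr i),
      forall i : 'I_m, R (inl i, inr i) && ~~ R (inr i, inl i) &
      forall a b, a != b -> R (a, b) -> R (b, a) -> is_x a && is_x b].
Proof.
case/and5P=> /forallP tot /forallP tr _ /forallP yy /andP [/forallP xy /forallP eqx].
split=> [a b | a b c hab hbc | i j ij | i | a b ab hab hba].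
- exact: (forallP (tot a)).
- by move: (forallP (forallP (tr a) b) c); rewrite hab hbc.
- by move: (forallP (yy i) j); rewrite ij.
- exact: xy.
- by move: (forallP (eqx a) b); rewrite ab hab hba.
Qed.

Definition sym_index m (a : sym m) : nat := match a with inl i | inr i => i end.

Section TupleType.

Variable mm : nat -> nat.

(* The parities keep every x apart from every y, and [mm j <= j] puts [x_i]
   strictly below [y_i]. *)
Definition point_value (s : seq nat) (b : bool) (i : nat) : nat :=
  if b then mm (nth 0 s i) * 2 else nth 0 s i * 2 + 1.

Definition sym_value m (s : seq nat) (a : sym m) : nat :=
  point_value s (is_x a) (sym_index a).

Definition tuple_type m (s : seq nat) : {ffun sym m * sym m -> bool} :=
  [ffun p => sym_value s p.1 <= sym_value s p.2].

Lemma tuple_type_sorted m s : size s = m -> ntype (tuple_type m s) -> sorted ltn s.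
Proof.
move=> sz /ntypeP [_ _ yy _ _]; apply/(sortedP 0) => i; rewrite sz => im.
have /andP [_] := yy (Ordinal (ltnW im)) (Ordinal im) (ltnSn i).
by rewrite ffunE /sym_value /point_value /=; lia.
Qed.

Hypothesis mm_le : forall j, mm j <= j.

Lemma tuple_type_ntype m s : sorted ltn s -> size s = m -> ntype (tuple_type m s).
Proof.
move=> srt sz.
have lt_nth (i j : 'I_m) : i < j -> nth 0 s i < nth 0 s j.
  by move=> ij; apply: (sorted_ltn_nth ltn_trans) => //; rewrite inE sz.
apply/and5P; split; [| | | |apply/andP; split]; apply/forallP => a.
- by apply/forallP => b; rewrite !ffunE leq_total.
- apply/forallP => b; apply/forallP => c; rewrite !ffunE.
  by apply/implyP => ab; apply/implyP; apply: leq_trans.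
- by rewrite ffunE.
- apply/forallP => j; apply/implyP => /lt_nth.
  by rewrite !ffunE /sym_value /point_value /=; lia.
- by rewrite !ffunE /sym_value /point_value /=; have := mm_le (nth 0 s a); lia.
- apply/forallP => b; apply/implyP; rewrite !ffunE.
  case: a => i; case: b => j //=; rewrite /sym_value /point_value /=; try lia.
  case/andP => /andP [ij le1 le2]; have [/lt_nth|/lt_nth|e] := ltngtP i j; try lia.
  by rewrite (val_inj e) eqxx in ij.
Qed.

Lemma point_value_rcons s a b i : i <= size s ->
  point_value (rcons s a) b i =
  if i < size s then point_value s b i else point_value [:: a] b 0.
Proof.
rewrite leq_eqVlt => /orP [/eqP ->|lti]; rewrite /point_value nth_rcons ?ltnn ?eqxx ?lti //.
Qed.

Lemma point_value_lt_last s a b b' i : nth 0 s i < mm a ->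
  point_value s b i < point_value [:: a] b' 0.
Proof.
have := mm_le (nth 0 s i); have := mm_le a; rewrite /point_value /=.
by case: b; case: b'; lia.
Qed.

Definition sym_of m (b : bool) (i : 'I_m) : sym m := if b then inl i else inr i.

Lemma tuple_type_rcons n s1 s2 a : size s1 = n -> size s2 = n ->
  (forall j, j \in s1 ++ s2 -> j < mm a) ->
  tuple_type n s1 = tuple_type n s2 ->
  tuple_type n.+1 (rcons s1 a) = tuple_type n.+1 (rcons s2 a).
Proof.
move=> sz1 sz2 small same.
have below s i b b' : {subset s <= s1 ++ s2} -> i < size s ->
    point_value s b i < point_value [:: a] b' 0.
  by move=> sub lti; apply/point_value_lt_last/small/sub/mem_nth.
have sub1 : {subset s1 <= s1 ++ s2} by move=> j; rewrite mem_cat => ->.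
have sub2 : {subset s2 <= s1 ++ s2} by move=> j; rewrite mem_cat orbC => ->.
apply/ffunP => -[u w]; rewrite !ffunE /sym_value /=.
have idx_le (v : sym n.+1) : sym_index v <= n by case: v => i; rewrite -ltnS ltn_ord.
rewrite !point_value_rcons ?sz1 ?sz2 ?idx_le //.
case: (ltnP (sym_index u) n) => hu; case: (ltnP (sym_index w) n) => hw.
- have := congr1 (fun R : {ffun _ -> bool} =>
    R (sym_of (is_x u) (Ordinal hu), sym_of (is_x w) (Ordinal hw))) same.
  by rewrite !ffunE /sym_value; case: (is_x u); case: (is_x w).
- by rewrite (ltnW (below s1 _ _ _ sub1 _)) ?(ltnW (below s2 _ _ _ sub2 _)) ?sz1 ?sz2.
- by rewrite leqNgt (below s1) ?sz1 // leqNgt (below s2) ?sz2.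
- by [].
Qed.

End TupleType.

Section Rank.

Variables (m : nat) (R : {ffun sym m * sym m -> bool}).
Hypothesis R_ntype : ntype R.

Definition rank (a : sym m) : nat := #|[pred b | R (b, a) && ~~ R (a, b)]|.

Lemma rank_lt_card a : rank a < #|sym m|.
Proof.
apply: proper_card; apply/properP; split; first exact: subset_predT.
by exists a; rewrite // !inE andbN.
Qed.

Lemma leq_rank a b : R (a, b) = (rank a <= rank b).
Proof.
have [tot tr _ _ _] := ntypeP R_ntype.
case ab: (R (a, b)).
  apply/esym/subset_leq_card/subsetP => c; rewrite !inE => /andP [ca ac].
  rewrite (tr _ _ _ ca ab); apply: contra ac; exact: tr.
have ba : R (b, a) by move: (tot a b); rewrite ab.
apply/esym/negbTE; rewrite -ltnNge; apply: proper_card.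
apply/properP; split; last by exists b; rewrite !inE /= ?ba ?ab ?andbN.
apply/subsetP => c; rewrite !inE => /andP [cb bc].
rewrite (tr _ _ _ cb ba); apply: contra bc => ac; exact: tr ac.
Qed.

Lemma rank_x_lt_y i : rank (inl i) < rank (inr i).
Proof. by have [_ _ _ /(_ i) /andP [_] + _] := ntypeP R_ntype; rewrite ltnNge -leq_rank. Qed.

Lemma rank_eq_x a b : rank a = rank b -> a != b -> is_x a && is_x b.
Proof.
have [_ _ _ _ eqx] := ntypeP R_ntype.
by move=> e ab; apply: eqx; rewrite // leq_rank e.
Qed.

End Rank.

Definition unbounded_fibre (HN : nat -> Prop) (mm : nat -> nat) (c : nat) : Prop :=
  forall M, exists z, [/\ HN z, mm z = c & M < z].

Definition fibre_rich (HN : nat -> Prop) (mm : nat -> nat) : Prop :=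
  forall N, exists j, [/\ HN j, N < mm j & unbounded_fibre HN mm (mm j)].

Definition tuple_in (HN : nat -> Prop) (m : nat) (s : seq nat) : Prop :=
  [/\ sorted ltn s, size s = m & forall j, j \in s -> HN j].

Definition update (F : nat -> nat) (J v : nat) (l : nat) : nat :=
  if l == J then v else F l.

Section Realization.

Variables (mm : nat -> nat) (HN : nat -> Prop).
Variables (m : nat) (R : {ffun sym m * sym m -> bool}).
Hypotheses (R_ntype : ntype R) (rich : fibre_rich HN mm).

(* [F l] is the value that the symbols of rank [l] will receive. *)
Definition realizes_at (F : nat -> nat) (a : sym m) : Prop :=
  match a with
  | inl i => exists2 c, F (rank R (inl i)) = c * 2 & unbounded_fibre HN mm c
  | inr i => exists y,
      [/\ F (rank R (inr i)) = y * 2 + 1, HN y & mm y * 2 = F (rank R (inl i))]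
  end.

Definition partial_realization (J : nat) (F : nat -> nat) : Prop :=
  {in [pred l | l < J] &, {homo F : l1 l2 / l1 < l2}} /\
  forall a, rank R a < J -> realizes_at F a.

Lemma realizes_at_update F J v a :
  rank R a < J -> realizes_at F a -> realizes_at (update F J v) a.
Proof.
rewrite /update; case: a => i /= ltJ; first by rewrite ltn_eqF.
by rewrite ltn_eqF // ltn_eqF // (ltn_trans (rank_x_lt_y R_ntype i)).
Qed.

Lemma partial_realization_step J F :
  partial_realization J F -> exists F', partial_realization J.+1 F'.
Proof.
case=> incF okF; pose B := \max_(l < J) F l.
have F_le_B l : l < J -> F l <= B.
  by move=> lJ; exact: (leq_bigmax (F := fun l : 'I_J => F l) (Ordinal lJ)).
suff [v Bv okv] : exists2 v, B < v &
    forall a, rank R a = J -> realizes_at (update F J v) a.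
  exists (update F J v); split.
    move=> l1 l2; rewrite !inE /update !ltnS => l1J l2J l12.
    have [e1|e1] := eqVneq l1 J; first by lia.
    have [e2|e2] := eqVneq l2 J; last by apply: incF; rewrite ?inE; lia.
    by apply: leq_ltn_trans Bv; apply: F_le_B; lia.
  move=> a; rewrite ltnS leq_eqVlt => /orP [/eqP|aJ]; first exact: okv.
  exact: realizes_at_update (okF a aJ).
case: (pickP (fun a => rank R a == J)) => [[i|i] /eqP iJ | none]; last first.
- by exists B.+1 => // a /eqP; rewrite none.
- (* [y_i] takes the next value above [B] in the fibre of [x_i] *)
  have xJ : rank R (inl i) < J by rewrite -iJ rank_x_lt_y.
  have [c Fx unb] := okF (inl i) xJ; have [z [Hz zc Bz]] := unb B.
  exists (z * 2 + 1); first lia.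
  case=> i' /= i'J; first by have /(_ isT) := rank_eq_x R_ntype (etrans i'J (esym iJ)).
  have -> : i' = i.
    apply: contraTeq isT => ne; apply: (rank_eq_x R_ntype (etrans i'J (esym iJ))).
    by apply: contra ne => /eqP [->].
  by exists z; rewrite /update iJ eqxx ltn_eqF // Fx zc.
- have [j [Hj Bj unb]] := rich B.
  exists (mm j * 2); first lia.
  case=> i' /= i'J; first by exists (mm j); rewrite /update ?i'J ?eqxx.
  by have /(_ isT) := rank_eq_x R_ntype (etrans i'J (esym iJ)).
Qed.

Lemma realize_type : exists2 s, tuple_in HN m s & tuple_type mm m s = R.
Proof.
have [F [incF okF]] : exists F, partial_realization #|sym m| F.
  elim: #|sym m| => [|J [F /partial_realization_step //]].
  by exists id; split.
have okF' a := okF a (rank_lt_card R a).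
have halfK y : (y * 2 + 1) %/ 2 = y by lia.
pose s := [seq F (rank R (inr i)) %/ 2 | i <- enum 'I_m].
have sz : size s = m by rewrite size_map size_enum_ord.
have nth_s (i : 'I_m) : nth 0 s i = F (rank R (inr i)) %/ 2.
  by rewrite (nth_map i) ?size_enum_ord // nth_ord_enum.
have value_F a : sym_value mm s a = F (rank R a).
  case: a => i; have [y [Fy _ my]] := okF' (inr i);
    rewrite /sym_value /point_value /= nth_s Fy halfK //; lia.
have type_R : tuple_type mm m s = R.
  apply/ffunP => -[a b]; rewrite ffunE /= !value_F leq_rank //.
  by apply: (leq_mono_in incF); rewrite inE rank_lt_card.
exists s => //; split=> //; first by apply: (tuple_type_sorted (mm := mm) sz); rewrite type_R.
by move=> j /mapP [i _ ->]; have [y [-> Hy _]] := okF' (inr i); rewrite halfK.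
Qed.

End Realization.

Lemma type_realizations mm HN m : fibre_rich HN mm ->
  exists w : {ffun sym m * sym m -> bool} -> seq nat,
    forall R, ntype R -> tuple_in HN m (w R) /\ tuple_type mm m (w R) = R.
Proof.
move=> rich.
have realize R : exists s, ntype R -> tuple_in HN m s /\ tuple_type mm m s = R.
  have [R_ntype|] := boolP (ntype R); last by exists [::].
  by have [s ??] := realize_type R_ntype rich; exists s.
by have [w ?] := fin_all_exists realize; exists w.
Qed.

Lemma pair_code_inj k a b r r' : a < k -> b < k -> r * k + a = r' * k + b -> r = r' /\ a = b.
Proof.
move=> ak bk; have [rr|rr|<-] := ltngtP r r' => e; last by split=> //; lia.
- have : r.+1 * k <= r' * k by rewrite leq_mul2r rr orbT.
  by rewrite mulSn; lia.
- have : r'.+1 * k <= r * k by rewrite leq_mul2r rr orbT.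
  by rewrite mulSn; lia.
Qed.

Lemma pair_code_lt k N a r : a < k -> r < N -> r * k + a < N * k.
Proof.
move=> ak rN; have : r.+1 * k <= N * k by rewrite leq_mul2r rN orbT.
by rewrite mulSn; lia.
Qed.

Lemma sorted_rcons_lt s a :
  sorted ltn s -> (forall j, j \in s -> j < a) -> sorted ltn (rcons s a).
Proof.
by case: s => //= x p srt lt_a; rewrite rcons_path srt /= lt_a ?mem_last.
Qed.

Lemma card_ntype m : T m = size (enum [pred R : {ffun sym m * sym m -> bool} | ntype R]).
Proof. exact: cardE. Qed.

Section TypeColouring.

Variables (mm : nat -> nat) (HN : nat -> Prop) (k n : nat) (cN : seq nat -> nat).
Hypotheses (mm_le : forall j, mm j <= j) (rich : fibre_rich HN mm).
Hypothesis cN_lt : forall s, sorted ltn s -> size s = n -> cN s < k.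

Definition type_colour (t : seq nat) : nat :=
  enum_rank (tuple_type mm n.+1 t) * k + cN (take n t).

Lemma cN_take_lt t : sorted ltn t -> size t = n.+1 -> cN (take n t) < k.
Proof. by move=> srt sz; rewrite cN_lt ?take_sorted // size_take sz ltnSn. Qed.

Hypothesis few_colours : exists2 L : seq nat,
  size L <= T n.+1 & forall t, tuple_in HN n.+1 t -> type_colour t \in L.

(* All [T (n+1)] types occur in [HN] with pairwise distinct colours, so they
   exhaust the colours available: the colour of a tuple is that of the
   chosen realization of its type. *)
Lemma colour_of_type t t' : tuple_in HN n.+1 t -> tuple_in HN n.+1 t' ->
  tuple_type mm n.+1 t = tuple_type mm n.+1 t' -> cN (take n t) = cN (take n t').
Proof.
have [L sizeL inL] := few_colours; have [w realize] := type_realizations n.+1 rich.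
pose types := enum [pred R : {ffun sym n.+1 * sym n.+1 -> bool} | ntype R].
pose colours := [seq type_colour (w R) | R <- types].
have realize_in R : R \in types -> tuple_in HN n.+1 (w R) /\ tuple_type mm n.+1 (w R) = R.
  by rewrite mem_enum => /realize.
have lt_k R : R \in types -> cN (take n (w R)) < k.
  by move=> /realize_in [[srt sz _] _]; exact: cN_take_lt.
have uniq_colours : uniq colours.
  rewrite map_inj_in_uniq ?enum_uniq // => R1 R2 R1t R2t e.
  have [/val_inj/enum_rank_inj + _] := pair_code_inj (lt_k _ R1t) (lt_k _ R2t) e.
  have [_ tR1] := realize_in _ R1t; have [_ tR2] := realize_in _ R2t.
  by rewrite tR1 tR2.
have sub : {subset colours <= L}.
  by move=> _ /mapP [R /realize_in [? _] ->]; apply: inL.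
have size_le : size L <= size colours by rewrite size_map -card_ntype.
suff rep u : tuple_in HN n.+1 u ->
    cN (take n u) = cN (take n (w (tuple_type mm n.+1 u))).
  by move=> ht ht' e; rewrite (rep t) // (rep t') // e.
move=> hu; have [srt sz _] := hu.
have /mapP [R Rt e] : type_colour u \in colours.
  by rewrite (uniq_min_size uniq_colours sub size_le).2 inL.
have [/val_inj/enum_rank_inj eR ->] := pair_code_inj (cN_take_lt srt sz) (lt_k _ Rt) e.
by rewrite eR (realize_in _ Rt).2.
Qed.

Lemma few_colours_below : exists2 L : seq nat,
  size L <= T n & forall s, tuple_in HN n s -> cN s \in L.
Proof.
have [w realize] := type_realizations n rich.
exists [seq cN (w R) | R <- enum [pred R | ntype R]]; first by rewrite size_map card_ntype.
move=> s [srt sz Hs]; pose s' := w (tuple_type mm n s).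
have s_ntype := tuple_type_ntype mm_le srt sz.
have [[srt' sz' Hs'] type_s'] := realize _ s_ntype.
have [a [Ha big _]] := rich (\max_(j <- s ++ s') j).
have small j : j \in s ++ s' -> j < mm a.
  by move=> js; apply: leq_ltn_trans big; exact: (leq_bigmax_seq (F := id) _ js).
have ext u : tuple_in HN n u -> {subset u <= s ++ s'} -> tuple_in HN n.+1 (rcons u a).
  move=> [srt_u sz_u H_u] sub; split.
  - by apply: sorted_rcons_lt => // j /sub /small /leq_trans; apply.
  - by rewrite size_rcons sz_u.
  - by move=> j; rewrite mem_rcons inE => /orP [/eqP ->|/H_u].
have := colour_of_type (ext s _ _) (ext s' _ _) (tuple_type_rcons mm_le sz sz' small (esym type_s')).
rewrite -!cats1 !take_size_cat // => -> //.
- by apply: map_f; rewrite mem_enum.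
- by move=> j; rewrite mem_cat => ->.
- by move=> j; rewrite mem_cat orbC => ->.
Qed.

End TypeColouring.

Lemma In_mem (T : eqType) (x : T) (l : list T) : List.In x l <-> x \in l.
Proof.
elim: l => [|y l IH] //=; rewrite inE; split.
- by case=> [->|/IH ->]; rewrite ?eqxx ?orbT.
- by case/orP => [/eqP ->|/IH]; [left|right].
Qed.

Lemma length_size (T : Type) (l : list T) : List.length l = size l.
Proof. by elim: l => //= x l ->. Qed.

Section Transport.

Variables (S : Type) (g : S -> nat) (g' : nat -> S).
Hypotheses (gK : cancel g g') (g'K : cancel g' g).

Definition preim_seq (s : seq nat) : S -> Prop := fun x => g x \in s.

Lemma In_map_g' x s : List.In x (List.map g' s) <-> g x \in s.
Proof.
elim: s => [|a s IH] //=; rewrite inE; split.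
- by case=> [<-|/IH ->]; rewrite ?g'K ?eqxx ?orbT.
- by case/orP => [/eqP <-|/IH]; [left; rewrite gK|right].
Qed.

Lemma In_map_g x l : List.In x l <-> g x \in map g l.
Proof.
elim: l => [|y l IH] //=; rewrite inE; split.
- by case=> [->|/IH ->]; rewrite ?eqxx ?orbT.
- by case/orP => [/eqP/(can_inj gK) ->|/IH]; [left|right].
Qed.

Lemma nsubset_preim_seq s : uniq s -> nsubset (size s) (preim_seq s).
Proof.
move=> s_uniq; exists (List.map g' s); split; last split.
- elim: s s_uniq => [|a s IH] /=; first by constructor.
  case/andP => a_s s_uniq; constructor; last exact: IH.
  by move/In_map_g'; rewrite g'K (negbTE a_s).
- by rewrite List.length_map length_size.
- by move=> x; rewrite In_map_g'.
Qed.

Lemma nsubset_sorted m A : nsubset m A ->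
  exists s, [/\ sorted ltn s, size s = m & A = preim_seq s].
Proof.
case=> l [l_uniq [<- Al]].
have memA x : A x <-> g x \in map g l by rewrite Al; exact: In_map_g.
exists (sort leq (map g l)); split.
- rewrite ltn_sorted_uniq_leq sort_uniq sort_sorted ?andbT; last exact: leq_total.
  elim: l l_uniq {Al memA} => //= x l IH /List.NoDup_cons_iff [x_l /IH ->].
  by rewrite andbT; apply/negP => /In_map_g.
- by rewrite size_sort size_map length_size.
- apply: functional_extensionality => x; apply: propositional_extensionality.
  by rewrite /preim_seq mem_sort.
Qed.

Lemma preim_seq_inj s1 s2 :
  sorted ltn s1 -> sorted ltn s2 -> preim_seq s1 = preim_seq s2 -> s1 = s2.
Proof.
move=> srt1 srt2 e; apply: (irr_sorted_eq ltn_trans ltnn) => // j.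
have := congr1 (fun A => A (g' j)) e; rewrite /preim_seq /= g'K => e'.
by apply/idP/idP; rewrite e'.
Qed.

Lemma preim_seq_sub s H : subset_of (preim_seq s) H <-> forall j, j \in s -> H (g' j).
Proof.
split=> sub x; last by rewrite /preim_seq => /sub; rewrite gK.
by move=> js; apply: sub; rewrite /preim_seq g'K.
Qed.

Definition sorted_code (A : S -> Prop) : seq nat :=
  epsilon (inhabits [::]) (fun s => sorted ltn s /\ A = preim_seq s).

Lemma sorted_codeK s : sorted ltn s -> sorted_code (preim_seq s) = s.
Proof.
move=> srt; rewrite /sorted_code.
case: (epsilon_spec (inhabits [::]) (fun s' => sorted ltn s' /\ preim_seq s = preim_seq s')).
  by exists s.
by move=> srt' e; rewrite {2}(preim_seq_inj srt srt' e).
Qed.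

End Transport.

Definition asbool (P : Prop) : bool := if excluded_middle_informative P then true else false.

Lemma asboolP (P : Prop) : reflect P (asbool P).
Proof. by rewrite /asbool; case: excluded_middle_informative => h; constructor. Qed.

Lemma exists_fibre_min (Y : Type) (h : nat -> Y) :
  exists mm : nat -> nat, (forall j, mm j <= j) /\ forall i j, mm i = mm j <-> h i = h j.
Proof.
have ex j : exists i, asbool (h i = h j) by exists j; apply/asboolP.
exists (fun j => ex_minn (ex j)); split=> [j|i j].
  by case: ex_minnP => mj _; apply; apply/asboolP.
case: ex_minnP => mi /asboolP hi min_i; case: ex_minnP => mj /asboolP hj min_j.
split=> [e|e]; first by rewrite -hi -hj e.
by apply/eqP; rewrite eqn_leq min_i ?min_j //; apply/asboolP; congruence.
Qed.

Lemma not_Ppoint_wild (S : Type) (U : (S -> Prop) -> Prop) : ~ Ppoint U ->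
  exists Y (f : S -> Y), forall A, U A ->
    ~ ((forall y, finite_set (fun x => A x /\ f x = y)) \/ (exists y, forall x, A x -> f x = y)).
Proof.
move=> notP; apply: NNPP => none; apply: notP => Y f; apply: NNPP => f_tame.
by apply: none; exists Y, f => A UA f_A; apply: f_tame; exists A.
Qed.

Section NotPpoint.

Variables (S : Type) (U : (S -> Prop) -> Prop) (Y : Type) (f : S -> Y).
Hypothesis U_ultra : ultrafilter U.
Hypothesis f_wild : forall A, U A ->
  ~ ((forall y, finite_set (fun x => A x /\ f x = y)) \/ (exists y, forall x, A x -> f x = y)).
Variables (g : S -> nat) (g' : nat -> S) (mm : nat -> nat).
Hypotheses (gK : cancel g g') (g'K : cancel g' g).
Hypothesis mmE : forall i j, mm i = mm j <-> f (g' i) = f (g' j).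

Lemma fibre_notin c : ~ U (fun x => mm (g x) = c).
Proof.
have [_ U_False U_up _ _] := U_ultra; move=> Uc.
have [x0 x0c] : exists x0, mm (g x0) = c.
  by apply: NNPP => none; apply: U_False; apply: (U_up _ _ Uc) => x xc; apply: none; exists x.
apply: (f_wild Uc); right; exists (f x0) => x xc.
by rewrite -(gK x) -(gK x0); apply/mmE; rewrite xc x0c.
Qed.

Lemma fibre_min_gt_in N : U (fun x => N < mm (g x)).
Proof.
have [_ _ U_up U_cap U_dich] := U_ultra.
have off c : U (fun x => mm (g x) <> c).
  by case: (U_dich (fun x => mm (g x) = c)) => // /fibre_notin.
elim: N => [|N IH]; first by apply: (U_up _ _ (off 0)) => x; lia.
by apply: (U_up _ _ (U_cap _ _ IH (off N.+1))) => x []; lia.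
Qed.

(* If [H] had no such [j], [f] would be finite-to-one on [H] above [N]. *)
Lemma ultrafilter_fibre_rich H : U H -> fibre_rich (fun j => H (g' j)) mm.
Proof.
have [_ _ U_up U_cap _] := U_ultra; move=> UH N; apply: NNPP => none.
pose A x := H x /\ N < mm (g x).
have UA : U A by apply: (U_up _ _ (U_cap _ _ UH (fibre_min_gt_in N))).
apply: (f_wild UA); left => y.
have [[x0 [[Hx0 Nx0] fx0]]|empty] := classic (exists x0, A x0 /\ f x0 = y); last first.
  by exists nil => x Ax; apply: empty; exists x.
have [M bounded] : exists M, forall z, H (g' z) -> mm z = mm (g x0) -> z <= M.
  apply: NNPP => unb; apply: none; exists (g x0); rewrite gK; split=> // M.
  apply: NNPP => noz; apply: unb; exists M => z Hz zc; rewrite leqNgt.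
  by apply/negP => Mz; apply: noz; exists z.
exists (List.map g' (iota 0 M.+1)) => x [[Hx _] fx].
apply/(In_map_g' gK g'K); rewrite mem_iota /= add0n ltnS.
by apply: bounded; rewrite ?gK //; apply/mmE; rewrite !gK fx fx0.
Qed.

End NotPpoint.

Theorem mainTheorem5 (S : Type) (U : (S -> Prop) -> Prop) (n : nat) :
  1 <= n ->
  countably_infinite S ->
  ultrafilter U ->
  nonprincipal U ->
  ~ Ppoint U ->
  weakly_ramsey U n.+1 (T n.+1) ->
  weakly_ramsey U n (T n).
Proof.
move=> _ [g [g' gK g'K]] U_ultra _ /not_Ppoint_wild [Y [f f_wild]] ramsey k c c_lt.
have [mm [mm_le mmE]] := exists_fibre_min (fun j => f (g' j)).
pose cN s := c (preim_seq g s).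
have cN_lt s : sorted ltn s -> size s = n -> cN s < k.
  move=> srt sz; apply: c_lt; rewrite -sz.
  exact/nsubset_preim_seq/(sorted_uniq ltn_trans ltnn).
pose d A := type_colour mm k n cN (sorted_code g A).
have d_code s : sorted ltn s -> d (preim_seq g s) = type_colour mm k n cN s.
  by move=> srt; rewrite /d (sorted_codeK g'K).
have d_lt A : nsubset n.+1 A -> d A < #|{ffun sym n.+1 * sym n.+1 -> bool}| * k.
  case/(nsubset_sorted gK) => s [srt sz ->]; rewrite d_code //.
  by apply: pair_code_lt; [exact: cN_take_lt | exact: ltn_ord].
have [H [UH [L [sizeL inL]]]] := ramsey _ d d_lt.
have rich := ultrafilter_fibre_rich U_ultra f_wild gK g'K mmE UH.
have [|L' sizeL' inL'] := few_colours_below mm_le rich cN_lt.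
  exists L; first by rewrite -length_size.
  move=> t [srt sz Ht]; rewrite -d_code //; apply/In_mem/inL.
  - by rewrite -sz; exact/nsubset_preim_seq/(sorted_uniq ltn_trans ltnn).
  - exact/(preim_seq_sub gK g'K).
exists H; split=> //; exists L'; split; first by rewrite length_size.
move=> A /(nsubset_sorted gK) [s [srt sz ->]] /(preim_seq_sub gK g'K) Hs.
by apply/In_mem/inL'.
Qed.
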